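(* Let $\Delta=\Delta(f)$ be a positive integer and $\lambda=\lambda(f)>0$ a real number, both depending on a real parameter $f$, such that $f\le \Delta^2+1$ and, as $f\to\infty$, \[ \Delta\log(1+\lambda)\to\infty \quad\text{ and }\quad \frac{2(\Delta\log(1+\lambda))^2}{f\,W(\Delta\log(1+\lambda))}\to 0\,. \] Then there is a function $\delta(f)\to 0$ as $f\to\infty$ such that for every such $f$ and every graph $G$ of maximum degree $\Delta$ in which the neighbourhood of every vertex spans at most $\Delta^2/f$ edges, writing $\mathbf{I}$ for the random independent set from the hard-core model on $G$ at fugacity $\lambda$, \[ \frac{1}{|V(G)|}\mathbb{E}|\mathbf{I}| \ge (1+\delta(f))\frac{\lambda}{1+\lambda}\cdot\frac{W(\Delta\log(1+\lambda))}{\Delta\log(1+\lambda)}\,. \]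
   Context: $\log$ is the natural logarithm. $W:[-1/e,\infty)\to[-1,\infty)$ is the Lambert $W$ function, the inverse of $z\mapsto ze^z$. For a graph $G$ with set $\mathcal{I}(G)$ of independent sets (including the empty set) and $\lambda>0$, the hard-core model on $G$ at fugacity $\lambda$ is the probability distribution on $\mathcal{I}(G)$ with $\Pr(\mathbf{I}=I)=\lambda^{|I|}/Z_G(\lambda)$, where $Z_G(\lambda)=\sum_{I\in\mathcal{I}(G)}\lambda^{|I|}$. ''The neighbourhood of a vertex $v$ spans at most $m$ edges'' means the subgraph induced by $N(v)$ has at most $m$ edges. *)

From HB Require Import structures.
From mathcomp Require Import all_boot all_order all_algebra.
From mathcomp Require Import all_classical all_reals all_analysis.
Set Implicit Arguments. Unset Strict Implicit. Unset Printing Implicit Defensive.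
Import Order.TTheory GRing.Theory Num.Theory.
Local Open Scope classical_set_scope.
Local Open Scope ring_scope.

(* Lambert W on [-1/e, oo): the unique w >= -1 with w * e^w = x
   (defaulting to 0 outside the domain). *)
Definition lambertW (R : realType) (x : R) : R :=
  xget 0 [set w : R | -1 <= w /\ w * expR w = x].

Definition simple_graph (V : finType) (adj : rel V) : Prop :=
  (forall x y, adj x y = adj y x) /\ (forall x, ~~ adj x x).

Definition nbhd (V : finType) (adj : rel V) (v : V) : {set V} :=
  [set u | adj v u].

(* maximum degree (0 for the empty graph) *)
Definition max_degree (V : finType) (adj : rel V) : nat :=
  \max_(v : V) #|nbhd adj v|.

Definition nbhd_edges (R : realType) (V : finType) (adj : rel V) (v : V) : R :=
  (#|[set p : V * V | [&& adj v p.1, adj v p.2 & adj p.1 p.2]]|)%:R / 2.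

Definition independent (V : finType) (adj : rel V) (I : {set V}) : bool :=
  [forall x in I, forall y in I, ~~ adj x y].

Definition hc_Z (R : realType) (V : finType) (adj : rel V) (lam : R) : R :=
  \sum_(I : {set V} | independent adj I) lam ^+ #|I|.

Definition hc_expected_size (R : realType) (V : finType) (adj : rel V) (lam : R) : R :=
  (\sum_(I : {set V} | independent adj I) (#|I|)%:R * lam ^+ #|I|) / hc_Z adj lam.

From HB Require Import structures.
From mathcomp Require Import all_boot all_order all_algebra.
From mathcomp Require Import all_classical all_reals all_analysis.
From mathcomp Require Import ring lra.
Import Order.TTheory GRing.Theory Num.Theory.
Import numFieldNormedType.Exports.
Local Open Scope ring_scope.
Set Implicit Arguments. Unset Strict Implicit. Unset Printing Implicit Defensive.

(** For a vertex [v] of [G] and the hard-core sample [I], let [Y_v] count the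
    neighbours of [v] with no neighbour in [I \ N(v)].  Revealing [I \ N(v)]
    first gives [Pr(v in I) >= lam/(1+lam) E (1+lam)^(-Y_v)], so by convexity
    of [exp] the occupancy fraction [alpha] satisfies
    [alpha >= lam/(1+lam) exp (- ln(1+lam) * y)], [y] the average of [E Y_v].
    Conversely, a neighbour [u] counted by [Y_v] either has no neighbour in [I],
    which has probability [(1+lam)/lam Pr(u in I)], or has one inside [N(v)],
    which costs an edge of [N(v)]; summing over [v] gives
    [lam/(1+lam) (y - 2 lam Delta^2/((1+lam) f)) <= Delta alpha].  Trading the
    two bounds off at [ln(1+lam) y = W(Delta ln(1+lam))] loses only a factor
    [exp(-d)] with [d <= 4 (Delta ln(1+lam))^2 / (f W(Delta ln(1+lam)))]. *)

Section IndependentSets.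
Variables (V : finType) (adj : rel V).
Implicit Types (v : V) (I J : {set V}).

Lemma independentP I :
  reflect (forall x y, x \in I -> y \in I -> ~~ adj x y) (independent adj I).
Proof.
apply: (iffP forall_inP) => [indI x y xI yI | indI x xI].
  by have /forall_inP := indI x xI; apply.
by apply/forall_inP => y yI; apply: indI.
Qed.

Lemma independentS I J : J \subset I -> independent adj I -> independent adj J.
Proof.
move=> /fintype.subsetP JI /independentP indI.
by apply/independentP => x y /JI xI /JI; apply: indI.
Qed.

Lemma independent0 : independent adj finset.set0.
Proof. by apply/independentP => x y; rewrite inE. Qed.

Lemma disjoint_nbhdP v I :
  reflect (forall y, y \in I -> ~~ adj v y) [disjoint nbhd adj v & I].
Proof.
rewrite disjoint_sym finset.disjoints_subset.
by apply: (iffP fintype.subsetP) => H y /H; rewrite !inE.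
Qed.

Lemma disjoint_nbhdC v I : [disjoint nbhd adj v & I] = (I \subset ~: nbhd adj v).
Proof. by rewrite disjoint_sym finset.disjoints_subset. Qed.

Lemma independent_disjoint_nbhd v I :
  independent adj I -> v \in I -> [disjoint nbhd adj v & I].
Proof. by move=> /independentP indI vI; apply/disjoint_nbhdP => y; apply: indI. Qed.

Hypothesis adj_simple : simple_graph adj.

Lemma independentU1 v J :
  independent adj (v |: J) = independent adj J && [disjoint nbhd adj v & J].
Proof.
have [adj_sym adj_irr] := adj_simple.
apply/idP/andP => [/independentP indvJ | [/independentP indJ /disjoint_nbhdP vJ]].
  split.
    by apply/independentP => x y xJ yJ; apply: indvJ; rewrite in_setU1 ?xJ ?yJ orbT.
  by apply/disjoint_nbhdP => y yJ; apply: indvJ; rewrite in_setU1 ?eqxx ?yJ ?orbT.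
apply/independentP => x y; rewrite !in_setU1 => /predU1P[-> | xJ] /predU1P[-> | yJ].
- exact: adj_irr.
- exact: vJ.
- by rewrite adj_sym; apply: vJ.
- exact: indJ.
Qed.

End IndependentSets.

Lemma exchange_big_card (R : pzSemiRingType) (T U : finType) (A : {set T}) (P : pred U)
    (C : T -> U -> bool) (F : U -> R) :
  \sum_(t in A) \sum_(u | P u && C t u) F u =
  \sum_(u | P u) #|[set t in A | C t u]|%:R * F u.
Proof.
under eq_bigr do rewrite big_mkcondr.
rewrite exchange_big /=; apply: eq_bigr => u _.
rewrite -big_mkcondr /= (eq_bigl (mem [set t in A | C t u])) => [|t]; last by rewrite !inE.
by rewrite sumr_const mulr_natl.
Qed.

Lemma sum_subset_expr (R : comPzSemiRingType) (V : finType) (U : {set V}) (x : R) :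
  \sum_(S : {set V} | S \subset U) x ^+ #|S| = (1 + x) ^+ #|U|.
Proof.
pose F i : R := if i \in U then x else 0.
have -> : (1 + x) ^+ #|U| = \prod_i (F i + 1).
  rewrite (bigID (mem U)) /= [X in _ * X]big1 => [|i /negbTE Ui]; last first.
    by rewrite /F Ui add0r.
  by rewrite mulr1 -prodr_const; apply: eq_bigr => i Ui; rewrite /F Ui addrC.
rewrite bigA_distr /= [RHS](bigID (fun S : {set V} => S \subset U)) /=.
rewrite [X in _ = _ + X]big1 ?addr0 => [|S SU]; last first.
  have [i /andP[iS iU]] : exists i, (i \in S) && (i \notin U).
    by apply/existsP; move: SU; apply: contraNT; rewrite negb_exists => /forallP H;
      apply/fintype.subsetP => i iS; have := H i; rewrite iS negbK.
  by rewrite (bigD1 i) //= iS /F (negbTE iU) mul0r.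
apply: eq_bigr => S SU.
rewrite (bigID (mem S)) /= [X in _ * X]big1 => [|i /negbTE -> //].
rewrite mulr1 -prodr_const; apply: eq_bigr => i iS.
by rewrite iS /F (fintype.subsetP SU i iS).
Qed.

Section SplitAlongSet.
Variables (V : finType) (N : {set V}).
Implicit Types W S : {set V}.

Lemma setU_split W S : W \subset ~: N -> S \subset N ->
  [/\ (W :|: S) :\: N = W, (W :|: S) :&: N = S & #|W :|: S| = (#|W| + #|S|)%N].
Proof.
rewrite -finset.disjoints_subset => WN SN.
have WS : [disjoint W & S] := disjointWr SN WN.
split.
- by rewrite finset.setDUl (finset.setDidPl WN) (eqP (_ : S :\: N == finset.set0))
    ?finset.setD_eq0 ?finset.setU0.
- by rewrite finset.setIUl (finset.disjoint_setI0 WN) (finset.setIidPl SN) finset.set0U.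
- by rewrite cardsU (finset.disjoint_setI0 WS) cards0 subn0.
Qed.

Lemma sum_setU_split (R : nmodType) (F : {set V} -> R) :
  \sum_(J : {set V}) F J =
  \sum_(W : {set V} | W \subset ~: N) \sum_(S : {set V} | S \subset N) F (W :|: S).
Proof.
rewrite (partition_big (fun J => J :\: N) (fun W => W \subset ~: N)) /=; last first.
  by move=> J _; rewrite finset.setDE finset.subsetIr.
apply: eq_bigr => W WN.
rewrite (reindex_onto (fun S => W :|: S) (fun J => J :&: N)) /=; last first.
  by move=> J /eqP <-; rewrite finset.setUC finset.setID.
apply: eq_bigl => S; apply/idP/idP => [/andP[_ /eqP <-] | SN].
  exact: finset.subsetIr.
by have [-> -> _] := setU_split WN SN; rewrite !eqxx.
Qed.

End SplitAlongSet.

Section Neighbourhoods.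
Variables (V : finType) (adj : rel V).
Implicit Types (u v : V) (I W : {set V}).

Lemma card_nbhd_le_max_degree u : (#|nbhd adj u| <= max_degree adj)%N.
Proof. exact: (leq_bigmax (F := fun v => #|nbhd adj v|)). Qed.

Lemma max_degree_gt0_card : (0 < max_degree adj)%N -> (0 < #|V|)%N.
Proof.
case: (pickP (@predT V)) => [v _ _ | V0]; first by apply/card_gt0P; exists v.
by rewrite /max_degree big_pred0.
Qed.

Definition nbhd_pairs v : {set V * V} :=
  [set p : V * V | [&& adj v p.1, adj v p.2 & adj p.1 p.2]].

Lemma nbhd_edgesE (R : realType) v : nbhd_edges R adj v = #|nbhd_pairs v|%:R / 2.
Proof.
rewrite /nbhd_edges; congr (_%:R / 2); apply: eq_card => p.
by rewrite finset.inE; apply/idP/idP => h; [move: h|]; rewrite in_setE.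
Qed.

Definition free_nbrs v W : {set V} := [set u in nbhd adj v | [disjoint nbhd adj u & W]].

Lemma free_nbrs_setD_sub v I :
  free_nbrs v (I :\: nbhd adj v) \subset
    free_nbrs v I :|: [set p.1 | p in [set p in nbhd_pairs v | p.2 \in I]].
Proof.
apply/fintype.subsetP => u; rewrite inE => /andP[uN /disjoint_nbhdP u_free].
rewrite finset.in_setU inE uN /=.
have [//|] := boolP [disjoint nbhd adj u & I].
rewrite -finset.setI_eq0 => /finset.set0Pn[y]; rewrite !inE => /andP[uy yI].
have yN : y \in nbhd adj v.
  by apply: contraTT uy => yN; apply: u_free; rewrite finset.in_setD yN yI.
apply/imsetP; exists (u, y) => //; move: uN yN; rewrite !inE /= => -> -> /=.
by rewrite uy yI.
Qed.

Lemma card_free_nbrs_setD v I :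
  (#|free_nbrs v (I :\: nbhd adj v)|
     <= #|free_nbrs v I| + #|[set p in nbhd_pairs v | p.2 \in I]|)%N.
Proof.
apply: leq_trans (subset_leq_card (free_nbrs_setD_sub v I)) _.
apply: leq_trans (leq_card_setU _ _) _.
by rewrite leq_add2l leq_imset_card.
Qed.

End Neighbourhoods.

Section HardCoreWeights.
Variables (R : realType) (V : finType) (adj : rel V) (lam : R).
Implicit Types (u v : V) (I W : {set V}).

Definition hc_Zin v : R := \sum_(I | independent adj I && (v \in I)) lam ^+ #|I|.

Definition hc_Zfree v : R :=
  \sum_(I | independent adj I && [disjoint nbhd adj v & I]) lam ^+ #|I|.

Hypothesis lam_gt0 : 0 < lam.

Let lam1_gt0 : 0 < 1 + lam. Proof. by rewrite addr_gt0. Qed.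

Let K_ge0 : 0 <= lam / (1 + lam). Proof. by rewrite divr_ge0 ?ltW. Qed.

Lemma hc_Z_gt0 : 0 < hc_Z adj lam.
Proof.
rewrite /hc_Z (bigD1 finset.set0) ?independent0 //= cards0 expr0.
apply: lt_le_trans ltr01 _; rewrite lerDl.
by apply: sumr_ge0 => I _; rewrite exprn_ge0 // ltW.
Qed.

Lemma hc_Z_ge0 : 0 <= hc_Z adj lam. Proof. exact: ltW hc_Z_gt0. Qed.

Lemma hc_expected_size_ge0 : 0 <= hc_expected_size adj lam.
Proof.
apply: divr_ge0 hc_Z_ge0.
by apply: sumr_ge0 => I _; rewrite mulr_ge0 ?ler0n ?exprn_ge0 ?ltW.
Qed.

Lemma hc_Zin_ge0 v : 0 <= hc_Zin v.
Proof. by apply: sumr_ge0 => I _; rewrite exprn_ge0 // ltW. Qed.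

Lemma hc_Zfree_le_Z v : hc_Zfree v <= hc_Z adj lam.
Proof.
rewrite /hc_Zfree /hc_Z big_mkcondr /=; apply: ler_sum => I _.
by case: ifP => // _; rewrite exprn_ge0 // ltW.
Qed.

Lemma sum_hc_Zin :
  \sum_v hc_Zin v = \sum_(I | independent adj I) #|I|%:R * lam ^+ #|I|.
Proof.
rewrite -(eq_bigl _ _ (@finset.in_setT V)).
rewrite (exchange_big_card [set: V] _ (fun v I => v \in I)).
by apply: eq_bigr => I _; congr (_%:R * _); apply: eq_card => v; rewrite !inE.
Qed.

Hypothesis adj_simple : simple_graph adj.

Lemma hc_Zin_Zfree v : (1 + lam) * hc_Zin v = lam * hc_Zfree v.
Proof.
set Zout := \sum_(I | independent adj I && [disjoint nbhd adj v & I] && (v \notin I))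
              lam ^+ #|I|.
have Zfree_split : hc_Zfree v = hc_Zin v + Zout.
  rewrite /hc_Zfree (bigID (fun I => v \in I)) /=; congr (_ + _).
  apply: eq_bigl => I; have [indI /= | //] := boolP (independent adj I).
  by have [vI | _] := boolP (v \in I); rewrite ?andbF ?andbT ?independent_disjoint_nbhd.
have Zin_shift : hc_Zin v = lam * Zout.
  rewrite /hc_Zin (reindex_onto (fun J => v |: J) (fun I => I :\ v)) /=; last first.
    by move=> I /andP[_ vI]; rewrite finset.setD1K.
  rewrite /Zout big_distrr /=; apply: eq_big => J; last first.
    by move=> /andP[_ /eqP <-]; rewrite cardsU1 finset.setD11 add1n exprS.
  rewrite setU11 andbT independentU1 //.
  have [vJ | vJ] := boolP (v \in J); last by rewrite finset.setU1K // eqxx !andbT.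
  rewrite andbF; apply/negbTE/andP => -[_ /eqP E].
  by move: vJ; rewrite -E finset.setD11.
by rewrite Zfree_split Zin_shift; ring.
Qed.

Lemma hc_Zin_le v : hc_Zin v <= lam / (1 + lam) * hc_Z adj lam.
Proof.
rewrite mulrAC ler_pdivlMr // mulrC hc_Zin_Zfree.
by apply: ler_wpM2l; [exact: ltW | exact: hc_Zfree_le_Z].
Qed.

Lemma sum_nbhd_pairs_hc_Zin_le v (b : R) :
  nbhd_edges R adj v <= b ->
  \sum_(p in nbhd_pairs adj v) hc_Zin p.2 <= 2 * b * (lam / (1 + lam) * hc_Z adj lam).
Proof.
rewrite nbhd_edgesE => edges_le.
apply: le_trans (ler_sum _ (fun p _ => hc_Zin_le p.2)) _.
rewrite sumr_const -[_ *+ #|_|]mulr_natl; apply: ler_wpM2r; last lra.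
by rewrite mulr_ge0 ?hc_Z_ge0.
Qed.

Lemma sum_nbhd_hc_Zin_le (D : nat) :
  (forall u, #|nbhd adj u| <= D)%N ->
  \sum_v \sum_(u in nbhd adj v) hc_Zin u <= D%:R * \sum_u hc_Zin u.
Proof.
have [adj_sym _] := adj_simple; move=> deg_le.
rewrite (exchange_big_dep predT) //= mulr_sumr; apply: ler_sum => u _.
rewrite (eq_bigl (mem (nbhd adj u))) => [|v]; last by rewrite !inE adj_sym.
by rewrite sumr_const -[_ *+ #|_|]mulr_natl; apply: ler_wpM2r; rewrite ?hc_Zin_ge0 ?ler_nat.
Qed.

Lemma sum_card_free_nbrs_le v :
  \sum_(I | independent adj I) #|free_nbrs adj v (I :\: nbhd adj v)|%:R * lam ^+ #|I|
    <= \sum_(u in nbhd adj v) hc_Zfree u + \sum_(p in nbhd_pairs adj v) hc_Zin p.2.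
Proof.
rewrite /hc_Zfree /hc_Zin.
rewrite (exchange_big_card (nbhd adj v) _ (fun u I => [disjoint nbhd adj u & I])).
rewrite (exchange_big_card (nbhd_pairs adj v) _ (fun p I => p.2 \in I)).
rewrite -big_split /=; apply: ler_sum => I _.
rewrite -mulrDl -natrD; apply: ler_wpM2r; first by rewrite exprn_ge0 // ltW.
by rewrite ler_nat card_free_nbrs_setD.
Qed.

Lemma sum_extensions_le v W :
  independent adj W ->
  \sum_(S : {set V} | S \subset nbhd adj v)
      (if independent adj (W :|: S) then lam ^+ #|S| else 0)
    <= (1 + lam) ^+ #|free_nbrs adj v W|.
Proof.
move=> indW; set U := free_nbrs adj v W.
have UN : U \subset nbhd adj v by apply/fintype.subsetP => u; rewrite inE => /andP[].
apply: (@le_trans _ _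
    (\sum_(S : {set V} | S \subset nbhd adj v) (if S \subset U then lam ^+ #|S| else 0))).
  apply: ler_sum => S SN; case: ifP => [indWS | _]; last first.
    by case: ifP => _; rewrite ?lexx // exprn_ge0 // ltW.
  suff -> : S \subset U by [].
  apply/fintype.subsetP => u uS; rewrite inE (fintype.subsetP SN u uS) /=.
  apply/disjoint_nbhdP => y yW; move/independentP: indWS; apply.
    by rewrite finset.in_setU uS orbT.
  by rewrite finset.in_setU yW.
rewrite -big_mkcondr (eq_bigl (fun S : {set V} => S \subset U)) => [|S].
  by rewrite sum_subset_expr lexx.
by apply/andP/idP => [[] // | SU]; split => //; exact: fintype.subset_trans SU UN.
Qed.

(* With [W = I :\: N(v)] fixed, every admissible [S = I :&: N(v)] lies in
   [free_nbrs v W], and [\sum_(S \subset U) lam ^+ #|S| = (1 + lam) ^+ #|U|]. *)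
Lemma sum_invexpr_free_nbrs_le v :
  \sum_(I | independent adj I)
      ((1 + lam) ^+ #|free_nbrs adj v (I :\: nbhd adj v)|)^-1 * lam ^+ #|I|
    <= hc_Zfree v.
Proof.
set N := nbhd adj v.
rewrite big_mkcond (sum_setU_split N) /=.
have -> : hc_Zfree v =
    \sum_(W : {set V} | W \subset ~: N) (if independent adj W then lam ^+ #|W| else 0).
  rewrite /hc_Zfree (eq_bigl (fun I => (I \subset ~: N) && independent adj I)).
    by rewrite big_mkcondr.
  by move=> I; rewrite andbC disjoint_nbhdC.
apply: ler_sum => W WN.
have [indW | /negbTE indWF] := boolP (independent adj W); last first.
  rewrite big1 // => S _; rewrite ifF //; apply: contraFF _ indWF.
  by apply: independentS; exact: finset.subsetUl.
set c := (1 + lam) ^+ #|free_nbrs adj v W|.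
have c_gt0 : 0 < c by rewrite exprn_gt0.
rewrite (eq_bigr (fun S => c^-1 * lam ^+ #|W| *
           (if independent adj (W :|: S) then lam ^+ #|S| else 0))) => [|S SN].
  rewrite -mulr_sumr; apply: le_trans (ler_wpM2l _ (sum_extensions_le v indW)) _.
    by rewrite mulr_ge0 ?invr_ge0 ?exprn_ge0 ?ltW.
  by rewrite mulrAC mulVf ?mul1r ?lt0r_neq0.
have [-> _ ->] := setU_split WN SN.
by case: ifP; rewrite ?mulr0 // exprD mulrA.
Qed.

End HardCoreWeights.

Lemma expR_mean_le (R : realType) (T : finType) (P : pred T) (w y : T -> R) :
  (forall i, P i -> 0 <= w i) -> 0 < \sum_(i | P i) w i ->
  (\sum_(i | P i) w i) * expR ((\sum_(i | P i) y i * w i) / \sum_(i | P i) w i)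
    <= \sum_(i | P i) expR (y i) * w i.
Proof.
move=> w_ge0 S_gt0.
set S := \sum_(i | P i) w i; set Y := \sum_(i | P i) y i * w i; set m := Y / S.
have tangent i : P i -> expR m * (1 + (y i - m)) * w i <= expR (y i) * w i.
  move=> Pi; apply: ler_wpM2r; first exact: w_ge0.
  rewrite -[in leRHS](subrK m (y i)) expRD [leLHS]mulrC.
  by apply: ler_wpM2r; [exact: expR_ge0 | exact: expR_ge1Dx].
apply: le_trans (ler_sum _ tangent).
have -> : \sum_(i | P i) expR m * (1 + (y i - m)) * w i = expR m * (S + Y - m * S).
  rewrite /S /Y mulr_sumr -big_split -sumrB mulr_sumr /=.
  by apply: eq_bigr => i _; ring.
by rewrite /m divfK ?gt_eqF // addrK mulrC lexx.
Qed.

Lemma expRN_lnM (R : realType) (a : R) (k : nat) :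
  0 < a -> expR (- (ln a * k%:R)) = (a ^+ k)^-1.
Proof. by move=> a_gt0; rewrite mulrC expRN expRM_natl lnK. Qed.

Section OccupancyBounds.
Variables (R : realType) (V : finType) (adj : rel V) (lam : R).

(* The mean of [#|free_nbrs v (I :\: N(v))|] for [v] uniform and [I] drawn
   from the hard-core model, independently. *)
Definition mean_free_nbrs : R :=
  (\sum_(p : V * {set V} | independent adj p.2)
      #|free_nbrs adj p.1 (p.2 :\: nbhd adj p.1)|%:R * lam ^+ #|p.2|)
    / (#|V|%:R * hc_Z adj lam).

Hypotheses (lam_gt0 : 0 < lam) (adj_simple : simple_graph adj) (V_gt0 : (0 < #|V|)%N).

Let n_gt0 : 0 < (#|V|%:R : R). Proof. by rewrite ltr0n. Qed.

Let lam1_gt0 : 0 < 1 + lam. Proof. by rewrite addr_gt0. Qed.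

Let sum_pairs (F : V -> {set V} -> R) :
  \sum_v \sum_(I | independent adj I) F v I = \sum_(p | independent adj p.2) F p.1 p.2.
Proof. exact: pair_big_dep. Qed.

Let le_scaled_ratio (X T : R) :
  lam * (#|V|%:R * hc_Z adj lam * X) <= (1 + lam) * T ->
  lam / (1 + lam) * X <= T / hc_Z adj lam / #|V|%:R.
Proof.
have Z_gt0 := hc_Z_gt0 adj lam_gt0.
move=> le_T; rewrite -subr_ge0.
have -> : T / hc_Z adj lam / #|V|%:R - lam / (1 + lam) * X =
    ((1 + lam) * T - lam * (#|V|%:R * hc_Z adj lam * X))
      / ((1 + lam) * hc_Z adj lam * #|V|%:R).
  by field; rewrite !gt_eqF.
by rewrite divr_ge0 ?subr_ge0 // ltW // !mulr_gt0.
Qed.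

Lemma expected_size_ge_expR :
  lam / (1 + lam) * expR (- (ln (1 + lam) * mean_free_nbrs))
    <= hc_expected_size adj lam / #|V|%:R.
Proof.
have Z_gt0 := hc_Z_gt0 adj lam_gt0.
pose w (p : V * {set V}) := lam ^+ #|p.2|.
pose y (p : V * {set V}) :=
  - (ln (1 + lam) * #|free_nbrs adj p.1 (p.2 :\: nbhd adj p.1)|%:R).
have weights : \sum_(p | independent adj p.2) w p = #|V|%:R * hc_Z adj lam.
  by rewrite -(sum_pairs (fun _ I => lam ^+ #|I|)) sumr_const mulr_natl.
have w_gt0 : 0 < \sum_(p | independent adj p.2) w p by rewrite weights mulr_gt0.
have mean : \sum_(p | independent adj p.2) y p * w p
            = - (ln (1 + lam) * mean_free_nbrs) * (#|V|%:R * hc_Z adj lam).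
  rewrite (eq_bigr (fun p => - ln (1 + lam) *
             (#|free_nbrs adj p.1 (p.2 :\: nbhd adj p.1)|%:R * lam ^+ #|p.2|))) => [|p _].
    by rewrite -mulr_sumr /mean_free_nbrs; field; rewrite !gt_eqF.
  by rewrite /y /w; ring.
have jensen := @expR_mean_le R _ (fun p => independent adj p.2) w y
                 (fun p _ => exprn_ge0 #|p.2| (ltW lam_gt0)) w_gt0.
rewrite weights mean mulfK ?gt_eqF ?mulr_gt0 // in jensen.
have free_le : \sum_(p | independent adj p.2) expR (y p) * w p
               <= \sum_v hc_Zfree adj lam v.
  rewrite -(sum_pairs (fun v I => expR (y (v, I)) * lam ^+ #|I|)) /=.
  apply: ler_sum => v _; under eq_bigr => I _ do rewrite /y /= expRN_lnM //.
  exact: sum_invexpr_free_nbrs_le.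
apply: le_scaled_ratio; rewrite -sum_hc_Zin.
have -> : (1 + lam) * \sum_v hc_Zin adj lam v = lam * \sum_v hc_Zfree adj lam v.
  by rewrite !mulr_sumr; apply: eq_bigr => v _; rewrite hc_Zin_Zfree.
apply: ler_wpM2l; [exact: ltW | exact: le_trans jensen free_le].
Qed.

Lemma expected_size_ge_linear (D : nat) (b : R) :
  (forall u, #|nbhd adj u| <= D)%N -> (forall v, nbhd_edges R adj v <= b) ->
  lam / (1 + lam) * (mean_free_nbrs - 2 * b * (lam / (1 + lam)))
    <= D%:R * (hc_expected_size adj lam / #|V|%:R).
Proof.
move=> deg_le edges_le.
have Z_gt0 := hc_Z_gt0 adj lam_gt0.
pose A := \sum_(p : V * {set V} | independent adj p.2)
            #|free_nbrs adj p.1 (p.2 :\: nbhd adj p.1)|%:R * lam ^+ #|p.2|.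
pose B := \sum_v \sum_(u in nbhd adj v) hc_Zfree adj lam u.
pose c := 2 * b * (lam / (1 + lam) * hc_Z adj lam).
have A_le : A <= B + #|V|%:R * c.
  rewrite /A -(sum_pairs (fun v I =>
             #|free_nbrs adj v (I :\: nbhd adj v)|%:R * lam ^+ #|I|)) /=.
  have -> : #|V|%:R * c = \sum_(v : V) c by rewrite sumr_const -[_ *+ #|_|]mulr_natl.
  rewrite /B -big_split /=; apply: ler_sum => v _.
  apply: le_trans; first exact: sum_card_free_nbrs_le.
  by rewrite lerD2l; exact: sum_nbhd_pairs_hc_Zin_le.
have B_le :
    lam * B <= (1 + lam) * (D%:R * \sum_(I | independent adj I) #|I|%:R * lam ^+ #|I|).
  have -> : lam * B = (1 + lam) * \sum_v \sum_(u in nbhd adj v) hc_Zin adj lam u.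
    rewrite /B !mulr_sumr; apply: eq_bigr => v _; rewrite !mulr_sumr.
    by apply: eq_bigr => u _; rewrite hc_Zin_Zfree.
  rewrite -sum_hc_Zin; apply: ler_wpM2l; [exact: ltW | exact: sum_nbhd_hc_Zin_le].
have -> : D%:R * (hc_expected_size adj lam / #|V|%:R) =
    D%:R * (\sum_(I | independent adj I) #|I|%:R * lam ^+ #|I|) / hc_Z adj lam / #|V|%:R.
  by rewrite /hc_expected_size !mulrA.
apply: le_scaled_ratio.
have -> : #|V|%:R * hc_Z adj lam * (mean_free_nbrs - 2 * b * (lam / (1 + lam))) =
    A - #|V|%:R * c.
  by rewrite /mean_free_nbrs /A /c; field; rewrite !gt_eqF.
apply: le_trans B_le; apply: ler_wpM2l; first exact: ltW.
by rewrite lerBlDr.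
Qed.

End OccupancyBounds.

(* Either [z <= w + d] and the first bound applies directly, or the second one
   wins because [w * expR (- d) <= w + d - c] as soon as [d = 2 c / w <= 1]. *)
Lemma expR_tradeoff (R : realType) (K w c z a : R) :
  0 < K -> 0 < w -> 0 <= c -> 2 * c / w <= 1 ->
  K * expR (- z) <= a -> K * (z - c) <= w * expR w * a ->
  expR (- (2 * c / w)) * K * expR (- w) <= a.
Proof.
move=> K_gt0 w_gt0 c_ge0 d_le1 z_bound lin_bound.
set d := 2 * c / w in d_le1 *.
have c2_ge0 : 0 <= 2 * c by lra.
have d_ge0 : 0 <= d by rewrite divr_ge0 // ltW.
have wd : w * d = 2 * c by rewrite mulrC divfK ?gt_eqF.
have [z_le | z_gt] := lerP z (w + d).
  apply: le_trans _ z_bound.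
  have -> : expR (- d) * K * expR (- w) = K * expR (- (w + d)) by rewrite opprD expRD; ring.
  by apply: ler_wpM2l; [exact: ltW | rewrite ler_expR lerN2].
have ed : (1 + d) * expR (- d) <= 1.
  rewrite -[leRHS]expR0 -(subrr d) expRD.
  by apply: ler_wpM2r; [exact: expR_ge0 | exact: expR_ge1Dx].
have tangent : w * expR (- d) <= w + d - c by nra.
have wew_gt0 : 0 < w * expR w by rewrite mulr_gt0 ?expR_gt0.
rewrite -(ler_pM2l wew_gt0).
have -> : w * expR w * (expR (- d) * K * expR (- w)) = K * (w * expR (- d)).
  have ew_neq0 : expR w != 0 by rewrite gt_eqF ?expR_gt0.
  by rewrite [expR (- w)]expRN; field.
apply: le_trans lin_bound; apply: ler_wpM2l; first exact: ltW.
by apply: le_trans tangent _; rewrite lerD2r ltW.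
Qed.

Lemma lambertW_pos_spec (R : realType) (a : R) :
  0 < a -> 0 < lambertW a /\ lambertW a * expR (lambertW a) = a.
Proof.
move=> a_gt0.
have exW : exists w : R, -1 <= w /\ w * expR w = a.
  have cont : continuous (fun w : R => w * expR w).
    by move=> y; apply: cvgM; [exact: cvg_id | exact: continuous_expR].
  have a_le : a <= a * expR a.
    by rewrite -{1}(mulr1 a) ler_pM2l // -expR0 ler_expR ltW.
  have [w w0a wa] : exists2 w, w \in `[0, a] & w * expR w = a.
    apply: IVT (ltW a_gt0) (continuous_subspaceT cont) _.
    by rewrite /= mul0r ge_min le_max (ltW a_gt0) a_le orbT.
  exists w; split => //; move: w0a; rewrite in_itv /= => /andP[w_ge0 _].
  exact: le_trans (lerN10 R) w_ge0.
have [_ Wa] := xgetPex 0 exW.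
split; last exact: Wa.
by rewrite -(pmulr_lgt0 _ (expR_gt0 (lambertW a))) [_ * _]Wa.
Qed.

Lemma div1D_le_ln1D (R : realType) (x : R) : 0 < x -> x / (1 + x) <= ln (1 + x).
Proof.
move=> x_gt0; have x1_gt0 : 0 < 1 + x by rewrite addr_gt0.
have := expR_ge1Dx (- ln (1 + x)); rewrite expRN lnK ?posrE //.
have -> : x / (1 + x) = 1 - (1 + x)^-1 by field; rewrite gt_eqF.
lra.
Qed.

Lemma tradeoff_exponent_bounds (R : realType) (lam D f w : R) :
  0 < lam -> 0 < f -> 0 < w ->
  0 <= 2 * (2 * (lam / (1 + lam)) * ln (1 + lam) * D ^+ 2 / f) / w
    <= 2 * (2 * (D * ln (1 + lam)) ^+ 2 / (f * w)).
Proof.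
move=> lam_gt0 f_gt0 w_gt0; have lam1_gt0 : 0 < 1 + lam by rewrite addr_gt0.
have L_gt0 : 0 < ln (1 + lam) by rewrite ln_gt0 // ltrDl.
have K_le := div1D_le_ln1D lam_gt0.
apply/andP; split.
  by rewrite ?(sqr_ge0, mulr_ge0, invr_ge0, ler0n) // ltW.
rewrite -subr_ge0.
have -> : 2 * (2 * (D * ln (1 + lam)) ^+ 2 / (f * w))
          - 2 * (2 * (lam / (1 + lam)) * ln (1 + lam) * D ^+ 2 / f) / w
        = 4 * D ^+ 2 * ln (1 + lam) * (ln (1 + lam) - lam / (1 + lam)) / (f * w).
  by field; rewrite !gt_eqF.
by rewrite ?(sqr_ge0, mulr_ge0, invr_ge0, ler0n, subr_ge0) // ltW.
Qed.

Lemma expected_size_ge_lambertW (R : realType) (V : finType) (adj : rel V)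
    (lam f : R) (D : nat) :
  0 < lam -> simple_graph adj -> max_degree adj = D -> (0 < D)%N -> 0 < f ->
  (forall v, nbhd_edges R adj v <= D%:R ^+ 2 / f) ->
  2 * (2 * (lam / (1 + lam)) * ln (1 + lam) * D%:R ^+ 2 / f)
    / lambertW (D%:R * ln (1 + lam)) <= 1 ->
  expR (- (2 * (2 * (lam / (1 + lam)) * ln (1 + lam) * D%:R ^+ 2 / f)
           / lambertW (D%:R * ln (1 + lam))))
    * (lam / (1 + lam)) * (lambertW (D%:R * ln (1 + lam)) / (D%:R * ln (1 + lam)))
    <= hc_expected_size adj lam / #|V|%:R.
Proof.
move=> lam_gt0 adj_simple degD D_gt0 f_gt0 edges_le d_le1.
have V_gt0 : (0 < #|V|)%N by apply: (@max_degree_gt0_card V adj); rewrite degD.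
have deg_le u : (#|nbhd adj u| <= D)%N by rewrite -degD card_nbhd_le_max_degree.
have lower := expected_size_ge_expR lam_gt0 adj_simple V_gt0.
have linear := expected_size_ge_linear lam_gt0 adj_simple V_gt0 deg_le edges_le.
set L := ln (1 + lam) in lower linear d_le1 *.
set K := lam / (1 + lam) in lower linear d_le1 *.
set w := lambertW (D%:R * L) in d_le1 *.
have L_gt0 : 0 < L by rewrite ln_gt0 // ltrDl.
have lam1_gt0 : 0 < 1 + lam by rewrite addr_gt0.
have K_gt0 : 0 < K by rewrite divr_gt0.
have DL_gt0 : 0 < D%:R * L by rewrite mulr_gt0 ?ltr0n.
have [w_gt0 wK] := lambertW_pos_spec DL_gt0; rewrite -/w in w_gt0 wK.
have -> : w / (D%:R * L) = expR (- w).
  by rewrite -wK expRN invfM mulrA divff ?mul1r ?gt_eqF.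
apply: (expR_tradeoff (z := L * mean_free_nbrs adj lam)) K_gt0 w_gt0 _ d_le1 lower _.
  by rewrite ?(sqr_ge0, mulr_ge0, invr_ge0, ler0n) // ltW.
have -> : K * (L * mean_free_nbrs adj lam - 2 * K * L * D%:R ^+ 2 / f)
          = L * (K * (mean_free_nbrs adj lam - 2 * (D%:R ^+ 2 / f) * K)) by ring.
have -> : w * expR w * (hc_expected_size adj lam / #|V|%:R)
          = L * (D%:R * (hc_expected_size adj lam / #|V|%:R)) by rewrite wK; ring.
by apply: ler_wpM2l; [exact: ltW | exact: linear].
Qed.

Local Open Scope classical_set_scope.

Lemma cvg_expRN_subr1 (R : realType) (d : R -> R) :
  d x @[x --> +oo] --> 0 ->
  (fun f => if (0 < f) && (d f <= 1) then expR (- d f) - 1 else -1) x @[x --> +oo] --> 0.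
Proof.
move=> d_lim.
have lim : (fun f => expR (- d f) - 1) x @[x --> +oo] --> expR (- 0) - 1.
  apply: cvgB; last exact: cvg_cst.
  exact: (continuous_cvg _ (@continuous_expR R _) (cvgN d_lim)).
rewrite oppr0 expR0 subrr in lim.
apply: cvg_trans lim; apply: near_eq_cvg; near=> f.
rewrite ifT //; apply/andP; split.
  by near: f; apply: nbhs_pinfty_gt; exact: real0.
by near: f; exact: cvgr_le 0 d_lim 1 ltr01.
Unshelve. all: end_near.
Qed.

Unset Implicit Arguments.

Theorem theorem2p1 (R : realType) (Delta : R -> nat) (lam : R -> R)
  (hDelta : forall f, (0 < Delta f)%N)
  (hlam : forall f, 0 < lam f)
  (hlim1 : (fun f => (Delta f)%:R * ln (1 + lam f)) x @[x --> +oo] --> +oo)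
  (hlim2 : (fun f => 2 * ((Delta f)%:R * ln (1 + lam f)) ^+ 2
                     / (f * lambertW ((Delta f)%:R * ln (1 + lam f))))
             x @[x --> +oo] --> 0) :
  exists delta : R -> R,
    delta x @[x --> +oo] --> 0 /\
    forall f : R, f <= (Delta f)%:R ^+ 2 + 1 ->
    forall (V : finType) (adj : rel V),
      simple_graph adj ->
      max_degree adj = Delta f ->
      (forall v, nbhd_edges R adj v <= (Delta f)%:R ^+ 2 / f) ->
      hc_expected_size adj (lam f) / (#|V|)%:R >=
        (1 + delta f) * (lam f / (1 + lam f)) *
        (lambertW ((Delta f)%:R * ln (1 + lam f)) / ((Delta f)%:R * ln (1 + lam f))).
Proof.
(* The
   guard in [delta] makes the bound vacuous when it cannot be applied, which by
   [cvg_expRN_subr1] only happens for bounded [f]. *)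
pose x f := (Delta f)%:R * ln (1 + lam f).
pose d f := 2 * (2 * (lam f / (1 + lam f)) * ln (1 + lam f) * (Delta f)%:R ^+ 2 / f)
            / lambertW (x f).
have x_gt0 f : 0 < x f by rewrite mulr_gt0 ?ltr0n ?hDelta // ln_gt0 // ltrDl hlam.
have W_gt0 f : 0 < lambertW (x f) by have [] := lambertW_pos_spec (x_gt0 f).
exists (fun f => if (0 < f) && (d f <= 1) then expR (- d f) - 1 else -1); split.
  apply: cvg_expRN_subr1.
  apply: (squeeze_cvgr (f := fun=> 0)
           (h := fun f => 2 * (2 * x f ^+ 2 / (f * lambertW (x f))))).
  - near=> f; apply: tradeoff_exponent_bounds (hlam f) _ (W_gt0 f).
    by near: f; apply: nbhs_pinfty_gt; exact: real0.
  - exact: cvg_cst.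
  - by rewrite -(mulr0 2); apply: cvgM => //; exact: cvg_cst.
move=> f _ V adj adj_simple degD edges_le /=.
case: ifP => [/andP[f_gt0 d_le1] | _].
  rewrite (_ : 1 + (expR (- d f) - 1) = expR (- d f)); last by rewrite addrC subrK.
  exact: expected_size_ge_lambertW.
by rewrite addrN !mul0r divr_ge0 ?hc_expected_size_ge0.
Unshelve. all: end_near.
Qed.
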